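(* Let $(\omega_a)_{a\in\mathbb{Z}^d}$ be real frequencies satisfying the following non-resonance condition: there exist $\gamma>0$, $\nu>0$, $c_0>0$ such that for all $r\ge3$ and all non-resonant ${\boldsymbol j}\in\mathcal{Z}^r$, $$|\Omega({\boldsymbol j})|\ge\frac{\gamma c_0^r}{\mu({\boldsymbol j})^{\nu r}}.$$ Let $N$ be fixed and let $Q\in\mathcal{P}_k$ be a homogeneous polynomial of degree $k$. Then the homological equation $\{\chi,H_0\}-Z=Q$ admits a solution $(\chi,Z)$ of homogeneous polynomials of degree $k$ such that $Z$ is in $N$-normal form and $$\|Z\|\le\|Q\|,\qquad \|\chi\|\le\frac{N^{\nu k}}{\gamma c_0^k}\|Q\|.$$
   Context: $\mathcal{Z}=\mathbb{Z}^d\times\{\pm1\}$; for $j=(a,\delta)$, $|j|=|a|$ and $\bar j=(a,-\delta)$; $z\in\mathbb{C}^{\mathcal{Z}}$ identified with $(\xi,\eta)$ via $z_{(a,1)}=\xi_a$, $z_{(a,-1)}=\eta_a$. $H_0=\sum_a\omega_a\xi_a\eta_a$. Poisson bracket: $\{F,G\}=i\sum_a\big(\frac{\partial F}{\partial\eta_a}\frac{\partial G}{\partial\xi_a}-\frac{\partial F}{\partial\xi_a}\frac{\partial G}{\partial\eta_a}\big)$. For ${\boldsymbol j}=(j_1,\dots,j_\ell)$, $j_i=(a_i,\delta_i)$: $z_{\boldsymbol j}=z_{j_1}\cdots z_{j_\ell}$, momentum $\mathcal{M}({\boldsymbol j})=\sum\delta_ia_i$, divisor $\Omega({\boldsymbol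 j})=\sum_i\delta_i\omega_{a_i}$, $\mathcal{I}_\ell=\{{\boldsymbol j}:\mathcal{M}({\boldsymbol j})=0\}$, and for $\ell\ge3$, $\mu({\boldsymbol j})$ is the third largest of $|j_1|,\dots,|j_\ell|$. ${\boldsymbol j}$ is resonant (${\boldsymbol j}\in\mathcal{N}_\ell$) if $\ell$ is even and ${\boldsymbol j}$ is, up to order, $(i_1,\dots,i_{\ell/2},\bar i_1,\dots,\bar i_{\ell/2})$; otherwise non-resonant. $\mathcal{P}_k$: real polynomials $P=\sum_{\ell=2}^k\sum_{{\boldsymbol j}\in\mathcal{I}_\ell}a_{\boldsymbol j}z_{\boldsymbol j}$ with $a_{\bar{\boldsymbol j}}=\overline{a_{\boldsymbol j}}$ and bounded coefficients, with norm $\|P\|=\sum_\ell\sup_{{\boldsymbol j}\in\mathcal{I}_\ell}|a_{\boldsymbol j}|$. $\mathcal{J}_\ell(N)=\{{\boldsymbol j}\in\mathcal{I}_\ell:\mu({\boldsymbol j})>N\}$; $Z\in\mathcal{P}_k$ is in $N$-normal form if $Z=\sum_{\ell=3}^k\sum_{{\boldsymbol j}\in\mathcal{N}_\ell\cup\mathcal{J}_\ell(N)}a_{\boldsymbol j}z_{\boldsymbol j}$. *)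

From HB Require Import structures.
From mathcomp Require Import all_boot all_order all_algebra perm.
From mathcomp Require Import all_classical all_reals.
From mathcomp Require Import exp.
From mathcomp Require Import complex.
Set Implicit Arguments. Unset Strict Implicit. Unset Printing Implicit Defensive.
Import Order.TTheory GRing.Theory Num.Theory.
Local Open Scope ring_scope.
Local Open Scope classical_set_scope.

Section Defs.
Variables (R : realType) (d : nat).

Definition lattice := 'rV[int]_d.
(* the index set  Z^d x {+-1};  the boolean encodes delta (true = +1, false = -1) *)
Definition idx := (lattice * bool)%type.
Definition sgn (b : bool) : int := if b then 1 else -1.
Definition barj (j : idx) : idx := (j.1, ~~ j.2).

(* |a| := max(1, Euclidean norm of a)  (so that |a| >= 1 and mu > 0) *)
Definition absZ (a : lattice) : R :=
  Num.max 1 (Num.sqrt (\sum_(i < d) ((a ord0 i)%:~R : R) ^+ 2)).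
Definition absj (j : idx) : R := absZ j.1.

Definition mindex (l : nat) := 'I_l -> idx.

Definition momentum (l : nat) (j : mindex l) : lattice :=
  \sum_(i < l) ((j i).1 *~ sgn (j i).2).
Definition Omega (omega : lattice -> R) (l : nat) (j : mindex l) : R :=
  \sum_(i < l) ((sgn (j i).2)%:~R * omega (j i).1).
(* third largest of |j_1|,...,|j_l| (meaningful for l >= 3) *)
Definition mu (l : nat) (j : mindex l) : R :=
  nth 0 (sort (fun x y : R => y <= x) [seq absj (j i) | i <- enum 'I_l]) 2.
Definition resonant (l : nat) (j : mindex l) : Prop :=
  exists m : nat, l = (2 * m)%N /\
  exists (s : {perm 'I_l}) (f : nat -> idx),
    forall k : 'I_l, j (s k) = if (k < m)%N then f k else barj (f (k - m)%N).

Definition cabs (z : R[i]) : R := Num.sqrt (complex.Re z ^+ 2 + complex.Im z ^+ 2).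
Definition cconj (z : R[i]) : R[i] := Complex (complex.Re z) (- complex.Im z).

(* A homogeneous polynomial of degree k, sum_{j in I_k} a_j z_j, is represented
   by its coefficient family a : (Z^d x {+-1})^k -> C. *)
Definition coeffs (k : nat) := mindex k -> R[i].

Definition homog_poly (k : nat) (a : coeffs k) : Prop :=
  [/\ (forall j, momentum j != 0 -> a j = 0),
      (forall j, a (fun i => barj (j i)) = cconj (a j)) &
      exists B : R, forall j, cabs (a j) <= B].

Definition pnorm (k : nat) (a : coeffs k) : R :=
  sup [set cabs (a j) | j in [set j : mindex k | momentum j = 0]].

(* Equality of polynomials (the coefficient family is not a unique representation
   since z_j does not depend on the order of j): equality of the coefficient of
   each monomial, computed by summing over all reorderings. *)
Definition poly_eq (k : nat) (a b : coeffs k) : Prop :=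
  forall j : mindex k,
    \sum_(s : {perm 'I_k}) a (fun i => j (s i)) =
    \sum_(s : {perm 'I_k}) b (fun i => j (s i)).

(* Poisson bracket {chi, H_0} with H_0 = sum_a omega_a xi_a eta_a.
   With {F,G} = i sum_a (dF/deta_a dG/dxi_a - dF/dxi_a dG/deta_a) one gets
   {z_(a,delta), H_0} = - i delta omega_a z_(a,delta), hence by Leibniz
   {z_j, H_0} = - i Omega(j) z_j; so the bracket acts on coefficients by: *)
Definition bracket_H0 (omega : lattice -> R) (k : nat) (a : coeffs k) : coeffs k :=
  fun j => - 'i%C * (Omega omega j)%:C%C * a j.

Definition normal_form (N : R) (k : nat) (a : coeffs k) : Prop :=
  forall j : mindex k, a j != 0 -> resonant j \/ N < mu j.

Definition nonres_cond (omega : lattice -> R) (gamma nu c0 : R) : Prop :=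
  forall (r : nat) (j : mindex r), (3 <= r)%N -> ~ resonant j ->
    gamma * c0 ^+ r / (mu j `^ (nu * r%:R)) <= `|Omega omega j|.

End Defs.

(* Split the multi-indices into "normal" ones (resonant, or with mu > N) and the
   others.  Z takes over -Q on the normal indices, which gives the normal form and
   ||Z|| <= ||Q||; on the others the bracket with H_0 multiplies coefficients by
   -i Omega(j), so chi = Q / (-i Omega) solves the equation there, and the
   non-resonance condition with mu(j) <= N bounds the small divisor by
   N^(nu k) / (gamma c0^k).  Everything commutes with j |-> bar j, which preserves
   the normal indices and negates Omega, so chi and Z inherit the reality
   condition of Q. *)
From HB Require Import structures.
From mathcomp Require Import all_boot all_order all_algebra perm.
From mathcomp Require Import all_classical all_reals.
From mathcomp Require Import exp.
From mathcomp Require Import complex.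
Set Implicit Arguments. Unset Strict Implicit. Unset Printing Implicit Defensive.
Import ComplexField.Normc.
Import Order.TTheory GRing.Theory Num.Theory.
Local Open Scope ring_scope.

Section Coefficients.
Variables (R : realType) (d : nat).

Lemma cabsE (z : R[i]) : cabs z = normc z.
Proof. by case: z. Qed.

Lemma cconjE (z : R[i]) : cconj z = (z^*)%C.
Proof. by case: z. Qed.

Lemma cabs_ge0 (z : R[i]) : 0 <= cabs z.
Proof. exact: sqrtr_ge0. Qed.

Lemma normc_mulNi_real (x : R) : normc (- 'i%C * x%:C%C : R[i]) = `|x|.
Proof.
rewrite normcM normcN /= !expr0n /= add0r addr0 expr1n sqrtr1 mul1r.
exact: sqrtr_sqr.
Qed.

Lemma mulNi_real_neq0 (x : R) : x != 0 -> (- 'i%C * x%:C%C : R[i]) != 0.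
Proof.
move=> x_neq0; apply/eqP => /(congr1 (@complex.Im R)) /=; simpc => /eqP.
by rewrite oppr_eq0 (negbTE x_neq0).
Qed.

Lemma conjc_div_mulNi_real (z : R[i]) (x : R) :
  ((z / (- 'i%C * x%:C%C))^*)%C = (z^*)%C / (- 'i%C * (- x)%:C%C).
Proof.
rewrite rmorphM fmorphV; congr (_ * _^-1).
by apply/eqP; rewrite eq_complex /=; simpc.
Qed.

Lemma bounded_coeffs_scale (k : nat) (a b : coeffs R d k) (c : R) :
  0 <= c -> (forall j, cabs (a j) <= c * cabs (b j)) ->
  (exists B, forall j, cabs (b j) <= B) -> exists B, forall j, cabs (a j) <= B.
Proof.
move=> c0 hab [B hB]; exists (c * B) => j.
by apply: le_trans (hab j) _; rewrite ler_wpM2l.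
Qed.

Lemma momentum_const0 (k : nat) : momentum (fun _ : 'I_k => (0, true) : idx d) = 0.
Proof. by rewrite /momentum big1 // => i _; rewrite mul0rz. Qed.

Lemma pnorm_le_scale (k : nat) (a b : coeffs R d k) (c : R) :
  0 <= c -> (forall j, cabs (a j) <= c * cabs (b j)) ->
  (exists B, forall j, cabs (b j) <= B) -> pnorm a <= c * pnorm b.
Proof.
move=> c0 hab [B hB].
have b_le_pnorm j : momentum j = 0 -> cabs (b j) <= pnorm b.
  by move=> hj; apply: ub_le_sup; [exists B => _ [i _ <-] | exists j].
apply: ge_sup; first by exists (cabs (a (fun=> (0, true)))), (fun=> (0, true));
  rewrite //= momentum_const0.
move=> _ [j hj <-]; apply: le_trans (hab j) _.
by rewrite ler_wpM2l // b_le_pnorm.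
Qed.

Definition barm (k : nat) (j : mindex d k) : mindex d k := fun i => barj (j i).

Lemma barmK (k : nat) : involutive (@barm k).
Proof.
by move=> j; apply: funext => i; rewrite /barm /barj /= negbK; case: (j i).
Qed.

Lemma Omega_barm (omega : lattice d -> R) (k : nat) (j : mindex d k) :
  Omega omega (barm j) = - Omega omega j.
Proof.
rewrite /Omega -sumrN; apply: eq_bigr => i _ /=.
by case: (j i) => a [] /=; rewrite ?mulN1r ?mul1r ?opprK.
Qed.

Lemma mu_barm (k : nat) (j : mindex d k) : mu R (barm j) = mu R j.
Proof. by []. Qed.

Lemma resonant_barm (k : nat) (j : mindex d k) : resonant j -> resonant (barm j).
Proof.
move=> [m [km [s [f hf]]]]; exists m; split=> //; exists s, (fun n => barj (f n)).
by move=> x; rewrite /barm hf; case: ifP.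
Qed.

Lemma mu_ge1 (k : nat) (j : mindex d k) : (3 <= k)%N -> 1 <= mu R j.
Proof.
move=> k3; rewrite /mu; set s := sort _ _.
have s_gt2 : (2 < size s)%N by rewrite size_sort size_map size_enum_ord.
have := mem_nth 0 s_gt2; rewrite mem_sort => /mapP [i _ ->].
by rewrite /absj /absZ le_max lexx.
Qed.

End Coefficients.

Section HomologicalEquation.
Variables (R : realType) (d : nat) (omega : lattice d -> R) (N : R) (k : nat).

Definition normal_index (j : mindex d k) : Prop := resonant j \/ N < mu R j.

Lemma normal_index_barm (j : mindex d k) : normal_index (barm j) = normal_index j.
Proof.
rewrite /normal_index mu_barm; apply: propext.
split=> -[h|h]; [left | right | left | right] => //.
  by rewrite -[j]barmK; apply: resonant_barm.
exact: resonant_barm.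
Qed.

Definition normal_part (Q : coeffs R d k) : coeffs R d k :=
  fun j => if pselect (normal_index j) then - Q j else 0.

Definition homological_solution (Q : coeffs R d k) : coeffs R d k :=
  fun j => if pselect (normal_index j) then 0
           else Q j / (- 'i%C * (Omega omega j)%:C%C).

Variable Q : coeffs R d k.
Hypothesis homogQ : homog_poly Q.

Lemma normal_part_normal_form : normal_form N (normal_part Q).
Proof.
by move=> j; rewrite /normal_part; case: (pselect (normal_index j)) => // h; rewrite eqxx.
Qed.

Lemma cabs_normal_part j : cabs (normal_part Q j) <= cabs (Q j).
Proof.
rewrite /normal_part; case: (pselect (normal_index j)) => h; rewrite !cabsE ?normcN //.
by rewrite normc0 -cabsE cabs_ge0.
Qed.

Lemma normal_part_homog : homog_poly (normal_part Q).
Proof.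
have [Qmom Qreal Qbd] := homogQ; split.
- move=> j /Qmom Qj0.
  by rewrite /normal_part Qj0 oppr0; case: (pselect (normal_index j)).
- move=> j; rewrite /normal_part normal_index_barm.
  case: (pselect (normal_index j)) => h.
    by rewrite Qreal !cconjE rmorphN.
  by rewrite cconjE rmorph0.
- by apply: bounded_coeffs_scale ler01 _ Qbd => j; rewrite mul1r cabs_normal_part.
Qed.

Lemma homological_solution_homog (C : R) :
  0 <= C -> (forall j, cabs (homological_solution Q j) <= C * cabs (Q j)) ->
  homog_poly (homological_solution Q).
Proof.
have [Qmom Qreal Qbd] := homogQ; move=> C_ge0 chi_bd; split.
- move=> j /Qmom Qj0.
  by rewrite /homological_solution Qj0 mul0r; case: (pselect (normal_index j)).
- move=> j; rewrite /homological_solution normal_index_barm.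
  case: (pselect (normal_index j)) => h.
    by rewrite cconjE rmorph0.
  by rewrite Qreal Omega_barm !cconjE conjc_div_mulNi_real.
- exact: bounded_coeffs_scale C_ge0 chi_bd Qbd.
Qed.

Lemma homological_solution_solves :
  (forall j, ~ normal_index j -> Omega omega j != 0) ->
  poly_eq (fun j => bracket_H0 omega (homological_solution Q) j - normal_part Q j) Q.
Proof.
move=> Omega_nz j; apply: eq_bigr => s _.
rewrite /bracket_H0 /homological_solution /normal_part.
case: (pselect (normal_index _)) => hP.
  by rewrite mulr0 sub0r opprK.
by rewrite subr0 mulrC divfK // mulNi_real_neq0 ?Omega_nz.
Qed.

End HomologicalEquation.

Section SmallDivisors.
Variables (R : realType) (d : nat) (omega : lattice d -> R).
Variables (gamma nu c0 : R) (N k : nat).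
Hypotheses (gamma_gt0 : 0 < gamma) (nu_gt0 : 0 < nu) (c0_gt0 : 0 < c0).
Hypotheses (nonres : nonres_cond omega gamma nu c0) (k_ge3 : (3 <= k)%N).

Let gc0_gt0 : 0 < gamma * c0 ^+ k.
Proof. by rewrite mulr_gt0 // exprn_gt0. Qed.

Lemma small_divisor_bound (j : mindex d k) : ~ normal_index (N%:R : R) j ->
  0 < `|Omega omega j| /\
  `|Omega omega j|^-1 <= N%:R `^ (nu * k%:R) / (gamma * c0 ^+ k).
Proof.
move=> nonnormal.
have nonres_j : ~ resonant j by move=> h; apply: nonnormal; left.
have mu_leN : mu R j <= N%:R.
  by rewrite leNgt; apply/negP => h; apply: nonnormal; right.
have mu_gt0 : 0 < mu R j by apply: lt_le_trans (mu_ge1 R j k_ge3).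
have lb_gt0 : 0 < gamma * c0 ^+ k / mu R j `^ (nu * k%:R).
  by rewrite divr_gt0 // powR_gt0.
have lb_le := nonres k_ge3 nonres_j.
split; first exact: lt_le_trans lb_le.
apply: le_trans (_ : (gamma * c0 ^+ k / mu R j `^ (nu * k%:R))^-1 <= _).
  by rewrite lef_pV2 ?posrE // (lt_le_trans lb_gt0).
rewrite invf_div; apply: ler_wpM2r; first by rewrite invr_ge0; apply: ltW.
apply: ge0_ler_powR; rewrite ?nnegrE ?ler0n ?(ltW mu_gt0) //.
by rewrite mulr_ge0 ?ler0n ?ltW.
Qed.

Lemma cabs_homological_solution (Q : coeffs R d k) j :
  cabs (homological_solution omega N%:R Q j) <=
  N%:R `^ (nu * k%:R) / (gamma * c0 ^+ k) * cabs (Q j).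
Proof.
rewrite /homological_solution; case: (pselect (normal_index _ j)) => hP.
  by rewrite cabsE normc0 mulr_ge0 ?cabs_ge0 ?divr_ge0 ?powR_ge0 ?ltW.
have [Om_gt0 Om_le] := small_divisor_bound hP.
rewrite !cabsE normcM normcV normc_mulNi_real mulrC.
by rewrite ler_wpM2r // -cabsE cabs_ge0.
Qed.

End SmallDivisors.

Theorem proposition2p4 (R : realType) (d : nat) (omega : lattice d -> R)
    (gamma nu c0 : R) (N k : nat) (Q : coeffs R d k) :
  0 < gamma -> 0 < nu -> 0 < c0 ->
  nonres_cond omega gamma nu c0 ->
  (3 <= k)%N ->
  homog_poly Q ->
  exists (chi Z : coeffs R d k),
    [/\ homog_poly chi, homog_poly Z, normal_form N%:R Z &
        poly_eq (fun j => bracket_H0 omega chi j - Z j) Q] /\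
    pnorm Z <= pnorm Q /\
    pnorm chi <= (N%:R `^ (nu * k%:R)) / (gamma * c0 ^+ k) * pnorm Q.
Proof.
move=> gamma_gt0 nu_gt0 c0_gt0 nonres k_ge3 homogQ.
have C_ge0 : 0 <= N%:R `^ (nu * k%:R) / (gamma * c0 ^+ k).
  by rewrite divr_ge0 ?powR_ge0 // mulr_ge0 ?exprn_ge0 ?ltW.
have chi_bd := cabs_homological_solution N gamma_gt0 nu_gt0 c0_gt0 nonres k_ge3 Q.
have small_div := small_divisor_bound gamma_gt0 nu_gt0 c0_gt0 nonres k_ge3.
have [_ _ Qbd] := homogQ.
exists (homological_solution omega N%:R Q), (normal_part N%:R Q); split; last split.
- split.
  + exact: (homological_solution_homog homogQ C_ge0 chi_bd).
  + exact: (normal_part_homog _ homogQ).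
  + exact: normal_part_normal_form.
  + apply: homological_solution_solves => j /small_div [Omega_gt0 _].
    by rewrite -normr_gt0.
- rewrite -[pnorm Q]mul1r.
  by apply: pnorm_le_scale ler01 _ Qbd => j; rewrite mul1r cabs_normal_part.
- exact: pnorm_le_scale C_ge0 chi_bd Qbd.
Qed.
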